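(* There is no connected, non-complete, $5$-regular and $1$ net-regular SRSG in $\mathcal C_1\cup\mathcal C_4\cup\mathcal C_5$ with parameters $(n,5,a,b,c)$ such that $(a,b)\in\{(2,-2),(1,1),(1,-2),(0,0),(0,-1),(-1,0),(-1,-1),(-2,2)\}$.
   Context: A signed graph $\dot G=(G,\sigma)$ is a simple graph $G$ with $\sigma:E(G)\to\{\pm1\}$; adjacency matrix $A_{\dot G}$ has entries $\sigma(v_iv_j)$ for adjacent vertices and $0$ otherwise. Degree and connectedness refer to $G$; net-degree is $d^+(v)-d^-(v)$; $\rho$ net-regular means all net-degrees equal $\rho$. $\dot G$ on $n$ vertices is an SRSG if it is neither homogeneous complete nor edgeless and there are $r\in\mathbb N$, $a,b,c\in\mathbb Z$ with $(A^2_{\dot G})_{ii}=r$, $(A^2_{\dot G})_{ij}=a$ for positive edges, $b$ for negative edges, $c$ for distinct non-adjacent pairs; parameters $(n,r,a,b,c)$. Classes: $\mathcal C_1$: $a=-b$ and (complete, or non-complete with $c\neq0$); $\mathcal C_4$: $a\ne-b$, non-complete, $c=0$; $\mathcal C_5$: $a\neq-b$, non-complete, $c\notin\{0,\frac{a+b}{2}\}$. *)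

From HB Require Import structures.
From mathcomp Require Import all_boot all_order all_algebra.
Set Implicit Arguments. Unset Strict Implicit. Unset Printing Implicit Defensive.
Import Order.TTheory GRing.Theory Num.Theory.
Local Open Scope ring_scope.

(* A signed graph on a finite vertex type V: a simple graph given by a
   symmetric irreflexive relation [adj], together with a sign function
   [sgn] (true = +1, false = -1), symmetric on edges. *)
Definition simple_graph (V : finType) (adj : rel V) : Prop :=
  (forall u, ~~ adj u u) /\ (forall u v, adj u v = adj v u).

Definition sign_sym (V : finType) (adj : rel V) (sgn : V -> V -> bool) : Prop :=
  forall u v, adj u v -> sgn u v = sgn v u.

Definition sA (V : finType) (adj : rel V) (sgn : V -> V -> bool) (u v : V) : int :=
  if adj u v then (if sgn u v then 1 else -1) else 0.

Definition sA2 (V : finType) (adj : rel V) (sgn : V -> V -> bool) (u v : V) : int :=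
  \sum_(w : V) sA adj sgn u w * sA adj sgn w v.

Definition complete_graph (V : finType) (adj : rel V) : Prop :=
  forall u v, u != v -> adj u v.

Definition edgeless (V : finType) (adj : rel V) : Prop :=
  forall u v, ~~ adj u v.

Definition homogeneous_complete (V : finType) (adj : rel V) (sgn : V -> V -> bool) : Prop :=
  complete_graph adj /\
  ((forall u v, adj u v -> sgn u v) \/ (forall u v, adj u v -> ~~ sgn u v)).

Definition connected (V : finType) (adj : rel V) : Prop :=
  forall u v, connect adj u v.

Definition deg (V : finType) (adj : rel V) (u : V) : nat := #|[set v | adj u v]|.

Definition regular (V : finType) (adj : rel V) (k : nat) : Prop :=
  forall u, deg adj u = k.

Definition pos_deg (V : finType) (adj : rel V) (sgn : V -> V -> bool) (u : V) : nat :=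
  #|[set v | adj u v && sgn u v]|.
Definition neg_deg (V : finType) (adj : rel V) (sgn : V -> V -> bool) (u : V) : nat :=
  #|[set v | adj u v && ~~ sgn u v]|.

Definition net_regular (V : finType) (adj : rel V) (sgn : V -> V -> bool) (rho : int) : Prop :=
  forall u, (pos_deg adj sgn u)%:Z - (neg_deg adj sgn u)%:Z = rho.

Definition SRSG (V : finType) (adj : rel V) (sgn : V -> V -> bool)
    (n r : nat) (a b c : int) : Prop :=
  #|V| = n /\
  ~ homogeneous_complete adj sgn /\ ~ edgeless adj /\
  (forall u, sA2 adj sgn u u = r%:Z) /\
  (forall u v, adj u v -> sgn u v -> sA2 adj sgn u v = a) /\
  (forall u v, adj u v -> ~~ sgn u v -> sA2 adj sgn u v = b) /\
  (forall u v, u != v -> ~~ adj u v -> sA2 adj sgn u v = c).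

Definition class_C1 (V : finType) (adj : rel V) (a b c : int) : Prop :=
  a = - b /\ (complete_graph adj \/ (~ complete_graph adj /\ c <> 0)).

Definition class_C4 (V : finType) (adj : rel V) (a b c : int) : Prop :=
  a <> - b /\ ~ complete_graph adj /\ c = 0.

(* c <> (a+b)/2 is stated as 2c <> a+b (equivalent over the integers/rationals). *)
Definition class_C5 (V : finType) (adj : rel V) (a b c : int) : Prop :=
  a <> - b /\ ~ complete_graph adj /\ c <> 0 /\ 2 * c <> a + b.

From HB Require Import structures.
From mathcomp Require Import all_boot all_order all_algebra.
From mathcomp Require Import zify.

Set Implicit Arguments.
Unset Strict Implicit.
Unset Printing Implicit Defensive.
Import Order.TTheory GRing.Theory Num.Theory.
Local Open Scope ring_scope.

(* Let A be the signed adjacency matrix.  Every row of A sums to the net degree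
   1, hence so does every row of A^2; reading row u of A^2 through the
   partition of the vertices into u, its 3 positive and 2 negative neighbours
   and its m = n - 6 non-neighbours gives 5 + 3a + 2b + cm = 1, and m is even
   because a 5-regular graph has an even number of vertices.  For the listed
   pairs (a, b) this leaves n in {8, 10, 12} and a few values of c.  In the
   vertex order (u, positive neighbours, negative neighbours, non-neighbours)
   the first row of A is fixed, and a row-by-row exhaustive search, pruned by
   the degree, the net degree and the prescribed entries of A^2, shows that
   no such A exists. *)

Definition is_sign (x : int) : bool := (x == 0) || (x == 1) || (x == -1).

Definition nnz (s : seq int) : nat := count (fun x => x != 0) s.

Definition sumz (s : seq int) : int := foldr +%R 0 s.

Fixpoint dotz (s t : seq int) : int :=
  if s is x :: s' then (if t is y :: t' then x * y + dotz s' t' else 0) else 0.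

Lemma sumzE s : sumz s = \sum_(x <- s) x.
Proof. by elim: s => [|x s IH]; rewrite ?big_nil ?big_cons //= IH. Qed.

Lemma sumz_cat s t : sumz (s ++ t) = sumz s + sumz t.
Proof. by rewrite !sumzE big_cat. Qed.

Lemma dotz_map (T : Type) (f g : T -> int) (s : seq T) :
  dotz (map f s) (map g s) = \sum_(x <- s) f x * g x.
Proof. by elim: s => [|x s IH]; rewrite ?big_nil ?big_cons //= IH. Qed.

(* The [k < d] test only prunes: a sequence of length [k] has at most [k]
   nonzero entries. *)
Fixpoint sign_seqs (k d : nat) (s : int) : seq (seq int) :=
  if (k < d)%N then [::] else
  if k is k'.+1 then
    [seq 0 :: t | t <- sign_seqs k' d s] ++
    (if d is d'.+1 then [seq 1 :: t | t <- sign_seqs k' d' (s - 1)] ++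
                        [seq -1 :: t | t <- sign_seqs k' d' (s + 1)]
     else [::])
  else if s == 0 then [:: [::]] else [::].

Lemma mem_sign_seqs t : all is_sign t -> t \in sign_seqs (size t) (nnz t) (sumz t).
Proof.
elim: t => [|x t IH] //= /andP[sign_x /IH {}IH].
rewrite ltnNge (count_size _ (x :: t)) /= !mem_cat.
move: sign_x; rewrite /is_sign => /orP[/orP[]|] /eqP -> /=; rewrite ?add0n ?add1n.
- by rewrite add0r map_f.
- by rewrite mem_cat addrC addrK map_f ?orbT.
- by rewrite mem_cat addrC addrK map_f ?orbT.
Qed.

Lemma all2_nth (S T : Type) (x0 : S) (y0 : T) (r : S -> T -> bool) s t :
  size s = size t -> (forall k, (k < size s)%N -> r (nth x0 s k) (nth y0 t k)) ->
  all2 r s t.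
Proof.
elim: s t => [|x s IH] [|y t] //= [eq_st] r_st.
by rewrite (r_st 0%N) //= IH // => k lt_k; apply: (r_st k.+1).
Qed.

Section RowCompletion.

Variables (n d : nat) (rho a b c : int).

Definition square_entry (e : int) : int :=
  if e == 1 then a else if e == -1 then b else c.

(* [rs] are the first [i := size rs] rows of a candidate adjacency matrix; by
   symmetry they fix the first [i] entries [pre] of row [i], the diagonal entry
   is [0], and the rest is any sign sequence completing the row to [d] nonzero
   entries of sum [rho] and having the prescribed products with the rows [rs].
   Conjunctions are written as [if]s so that [vm_compute] short-circuits them. *)
Fixpoint completable (fuel : nat) (rs : seq (seq int)) : bool :=
  if fuel is f.+1 then
    let i := size rs in
    let pre := [seq nth 0 q i | q <- rs] in
    if (d < nnz pre)%N then false else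
    has (fun t => let r := pre ++ 0 :: t in
           if all2 (fun x q => dotz r q == square_entry x) pre rs
           then completable f (rcons rs r) else false)
        (sign_seqs (n - i.+1) (d - nnz pre) (rho - sumz pre))
  else true.

Definition srsg_rows (R : seq (seq int)) : Prop :=
  size R = n /\
  forall i, (i < n)%N ->
    [/\ size (nth [::] R i) = n, nth 0 (nth [::] R i) i = 0,
        forall j, (j < n)%N -> nth 0 (nth [::] R i) j = nth 0 (nth [::] R j) i,
        all is_sign (nth [::] R i) &
      [/\ nnz (nth [::] R i) = d, sumz (nth [::] R i) = rho &
        forall k, (k < i)%N ->
          dotz (nth [::] R i) (nth [::] R k) = square_entry (nth 0 (nth [::] R i) k)]].

Lemma completable_srsg_rows R :
  srsg_rows R -> forall i, (i <= n)%N -> completable (n - i) (take i R).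
Proof.
move=> [size_R rowsR] i le_in; move def_f: (n - i)%N => f.
elim: f i le_in def_f => [|f IH] i le_in def_f //=.
have lt_in : (i < n)%N by rewrite -subn_gt0 def_f.
have size_take_R : size (take i R) = i by rewrite size_take size_R lt_in.
rewrite size_take_R.
have [size_r diag_r sym_r sign_r [nnz_r sum_r dot_r]] := rowsR i lt_in.
set r := nth [::] R i in size_r diag_r sym_r sign_r nnz_r sum_r dot_r *.
have size_take_r : size (take i r) = i by rewrite size_takel // size_r ltnW.
have pre_r : [seq nth 0 q i | q <- take i R] = take i r.
  apply: (@eq_from_nth _ 0); first by rewrite size_map size_take_R size_take_r.
  move=> m; rewrite size_map size_take_R => lt_mi.
  by rewrite (nth_map [::]) ?size_take_R // !nth_take // sym_r // (ltn_trans lt_mi).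
have split_r : r = take i r ++ 0 :: drop i.+1 r.
  by rewrite -diag_r -drop_nth ?size_r // cat_take_drop.
have nnz_split : nnz r = (nnz (take i r) + nnz (drop i.+1 r))%N.
  by rewrite {1}split_r /nnz count_cat.
have sum_split : sumz r = sumz (take i r) + sumz (drop i.+1 r).
  by rewrite {1}split_r sumz_cat /= add0r.
rewrite pre_r.
have -> : (d < nnz (take i r))%N = false.
  by apply/negbTE; rewrite -leqNgt -nnz_r nnz_split leq_addr.
apply/hasP; exists (drop i.+1 r).
  have -> : (n - i.+1)%N = size (drop i.+1 r) by rewrite size_drop size_r.
  rewrite -nnz_r nnz_split addKn -sum_r sum_split addrC addKr.
  by apply/mem_sign_seqs/allP => x /mem_drop; apply: (allP sign_r).
rewrite -split_r (@all2_nth _ _ 0 [::]); last 2 first.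
- by rewrite size_take_R size_take_r.
- by move=> k; rewrite size_take_r => lt_ki; rewrite !nth_take // dot_r.
by rewrite -(take_nth [::]) ?size_R // IH // subnS def_f.
Qed.

End RowCompletion.

Lemma even_sum_symmetric (T : finType) (F : T -> T -> nat) :
  (forall x, F x x = 0%N) -> (forall x y, F x y = F y x) ->
  ~~ odd (\sum_x \sum_y F x y).
Proof.
move=> F_diag F_sym; pose lt (x y : T) := (enum_rank x < enum_rank y)%N.
have split_F x y : F x y = (F x y * lt x y + F y x * lt y x)%N.
  rewrite -F_sym /lt; case: ltngtP => [_|_|/val_inj/enum_rank_inj ->];
    by rewrite ?muln1 ?muln0 ?addn0 ?F_diag.
have -> : (\sum_x \sum_y F x y =
           \sum_x \sum_y F x y * lt x y + \sum_x \sum_y F y x * lt y x)%N.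
  rewrite -big_split; apply: eq_bigr => x _.
  by rewrite -big_split; apply: eq_bigr => y _; apply: split_F.
by rewrite [X in (_ + X)%N]exchange_big addnn odd_double.
Qed.

Lemma regular_card_even (V : finType) (adj : rel V) (d : nat) :
  simple_graph adj -> regular adj d -> ~~ odd (d * #|V|).
Proof.
move=> [adj_irr adj_sym] reg.
have deg_sum x : deg adj x = (\sum_y (adj x y : nat))%N.
  by rewrite /deg -sum1_card big_mkcond; apply: eq_bigr => y _; rewrite inE.
have -> : (d * #|V| = \sum_x deg adj x)%N.
  by rewrite (eq_bigr _ (fun x _ => reg x)) sum_nat_const mulnC.
under eq_bigr => x _ do rewrite deg_sum.
by apply: even_sum_symmetric => [x|x y]; [rewrite (negbTE (adj_irr x)) | rewrite adj_sym].
Qed.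

Section AdjacencyRows.

Variables (V : finType) (adj : rel V) (sgn : V -> V -> bool).
Hypotheses (adj_simple : simple_graph adj) (sgn_sym : sign_sym adj sgn).

Local Notation A := (sA adj sgn).

Lemma sA_sym x y : A x y = A y x.
Proof.
have [_ adj_sym] := adj_simple; rewrite /sA adj_sym.
by case: ifP => // adj_yx; rewrite (sgn_sym adj_yx).
Qed.

Lemma sA_diag x : A x x = 0.
Proof. by have [adj_irr _] := adj_simple; rewrite /sA (negbTE (adj_irr x)). Qed.

Lemma sA_eq0 x y : (A x y != 0) = adj x y.
Proof. by rewrite /sA; case: (adj x y); case: (sgn x y). Qed.

Lemma is_sign_sA x y : is_sign (A x y).
Proof. by rewrite /sA /is_sign; case: (adj x y); case: (sgn x y). Qed.

Lemma sum_indicator (p : pred V) : \sum_y ((p y : nat)%:Z) = #|p|%:Z.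
Proof.
rewrite -sum1_card (big_morph Posz PoszD (erefl 0%:Z)) [RHS]big_mkcond.
by apply: eq_bigr => y _; rewrite unfold_in; case: (p y).
Qed.

Lemma sum_sA x : \sum_y A x y = (pos_deg adj sgn x)%:Z - (neg_deg adj sgn x)%:Z.
Proof.
have -> : \sum_y A x y =
    \sum_y ((adj x y && sgn x y : nat)%:Z) - \sum_y ((adj x y && ~~ sgn x y : nat)%:Z).
  by rewrite -sumrB; apply: eq_bigr => y _; rewrite /sA; case: (adj x y); case: (sgn x y).
by rewrite !sum_indicator /pos_deg /neg_deg !cardsE.
Qed.

Lemma pos_neg_deg x : (pos_deg adj sgn x + neg_deg adj sgn x)%N = deg adj x.
Proof.
rewrite /deg /pos_deg /neg_deg -(cardsID [set v | sgn x v] [set v | adj x v]).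
by congr (_ + _)%N; apply: eq_card => v; rewrite !inE // andbC.
Qed.

Definition adj_rows (s : seq V) : seq (seq int) := [seq [seq A x y | y <- s] | x <- s].

Section Enumeration.

Variable s : seq V.
Hypotheses (s_uniq : uniq s) (mem_s : forall v, v \in s).

Lemma big_enumeration (F : V -> int) : \sum_(v <- s) F v = \sum_v F v.
Proof. by rewrite big_uniq //; apply: eq_bigl => v; rewrite mem_s. Qed.

Lemma count_enumeration (p : pred V) : count p s = #|p|.
Proof.
rewrite -size_filter -(card_uniqP _) ?filter_uniq //.
by apply: eq_card => v; rewrite mem_filter mem_s andbT.
Qed.

Lemma size_enumeration : size s = #|V|.
Proof. by rewrite -(count_predT s) count_enumeration. Qed.

Variables (d : nat) (rho : int) (n r : nat) (a b c : int).
Hypotheses (reg : regular adj d) (net : net_regular adj sgn rho)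
  (srsg : SRSG adj sgn n r a b c).

Lemma srsg_rows_adj : srsg_rows n d rho a b c (adj_rows s).
Proof.
have [card_V [_ [_ [_ [A2_pos [A2_neg A2_non]]]]]] := srsg.
have size_s : size s = n by rewrite size_enumeration.
split=> [|i lt_in]; first by rewrite size_map.
have lt_is : (i < size s)%N by rewrite size_s.
have [x0 _] : {x0 | x0 \in V}.
  by apply/sigW/card_gt0P; rewrite -size_enumeration (leq_ltn_trans _ lt_is).
rewrite (nth_map x0) //; set x := nth x0 s i.
split.
- by rewrite size_map.
- by rewrite (nth_map x0) // sA_diag.
- by move=> j lt_jn; rewrite !(nth_map x0) ?size_s // sA_sym.
- by apply/allP => _ /mapP[y _ ->]; apply: is_sign_sA.
split.
- rewrite /nnz count_map (eq_count (a2 := adj x)) => [|y]; last by rewrite /= sA_eq0.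
  by rewrite count_enumeration -(reg x); apply: eq_card => y; rewrite inE.
- by rewrite sumzE big_map big_enumeration sum_sA net.
move=> k lt_ki; have lt_ks : (k < size s)%N by rewrite (ltn_trans lt_ki).
rewrite (nth_map x0) // dotz_map (nth_map x0) //; set z := nth x0 s k.
have -> : \sum_(y <- s) A x y * A z y = sA2 adj sgn x z.
  by rewrite big_enumeration; apply: eq_bigr => y _; rewrite [A z y]sA_sym.
have neq_xz : x != z by rewrite nth_uniq // neq_ltn lt_ki orbT.
rewrite /square_entry /sA; case adj_xz: (adj x z); case sgn_xz: (sgn x z) => /=.
- exact: A2_pos.
- by apply: A2_neg; rewrite ?sgn_xz.
- by apply: A2_non; rewrite ?adj_xz.
- by apply: A2_non; rewrite ?adj_xz.
Qed.

End Enumeration.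

Definition pos_nbrs u := [set v | adj u v && sgn u v].
Definition neg_nbrs u := [set v | adj u v && ~~ sgn u v].
Definition non_nbrs u := [set v | (v != u) && ~~ adj u v].

Definition star_enum u := u :: enum (pos_nbrs u) ++ enum (neg_nbrs u) ++ enum (non_nbrs u).

Lemma star_enum_uniq u : uniq (star_enum u).
Proof.
have [adj_irr _] := adj_simple.
rewrite /star_enum cons_uniq !mem_cat !mem_enum !inE (negbTE (adj_irr u)) eqxx /=.
rewrite !cat_uniq !enum_uniq /= andbT; apply/andP; split.
  apply/hasPn => v; rewrite mem_cat !mem_enum !inE.
  by case: (adj u v) (sgn u v) => [] []; rewrite ?andbF.
by apply/hasPn => v; rewrite !mem_enum !inE; case: (adj u v); rewrite ?andbF.
Qed.

Lemma mem_star_enum u v : v \in star_enum u.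
Proof.
rewrite inE !mem_cat !mem_enum !inE.
by case: (v =P u) => //= _; case: (adj u v); case: (sgn u v).
Qed.

Lemma card_star u : #|V| = (pos_deg adj sgn u + neg_deg adj sgn u + #|non_nbrs u|).+1.
Proof.
rewrite -(size_enumeration (star_enum_uniq u) (mem_star_enum u)) /=.
by rewrite !size_cat -!cardE addnA.
Qed.

Definition first_row (n p q : nat) : seq int :=
  0 :: nseq p 1 ++ nseq q (-1) ++ nseq (n - (p + q).+1) 0.

Lemma map_eq_nseq (T : eqType) (f : T -> int) (k : int) (s : seq T) :
  {in s, forall y, f y = k} -> map f s = nseq (size s) k.
Proof.
elim: s => [|y s IH] //= f_k; rewrite f_k ?mem_head // IH // => z s_z.
by rewrite f_k // inE s_z orbT.
Qed.

Lemma head_adj_rows_star u :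
  nth [::] (adj_rows (star_enum u)) 0 =
  first_row #|V| (pos_deg adj sgn u) (neg_deg adj sgn u).
Proof.
rewrite /adj_rows /= sA_diag !map_cat (@map_eq_nseq _ _ 1); last first.
  by move=> y; rewrite mem_enum inE /sA => /andP[-> ->].
rewrite (@map_eq_nseq _ _ (-1)); last first.
  by move=> y; rewrite mem_enum inE /sA => /andP[-> /negbTE ->].
rewrite (@map_eq_nseq _ _ 0); last first.
  by move=> y; rewrite mem_enum inE /sA => /andP[_ /negbTE ->].
by rewrite -!cardE (card_star u) /first_row subSS addKn.
Qed.

Section Star.

Variables (u : V) (d : nat) (rho : int) (n r : nat) (a b c : int).
Hypotheses (reg : regular adj d) (net : net_regular adj sgn rho)
  (srsg : SRSG adj sgn n r a b c).

Lemma completable_first_row :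
  completable n d rho a b c n.-1 [:: first_row n (pos_deg adj sgn u) (neg_deg adj sgn u)].
Proof.
have [card_V _] := srsg.
have n_gt0 : (0 < n)%N by rewrite -card_V (card_star u).
have uniq_u := star_enum_uniq u; have mem_u := mem_star_enum u.
have := completable_srsg_rows (srsg_rows_adj uniq_u mem_u reg net srsg) n_gt0.
by rewrite subn1 (take_nth [::]) // take0 head_adj_rows_star card_V.
Qed.

Lemma sum_square_row : \sum_v sA2 adj sgn u v = rho * rho.
Proof.
rewrite /sA2 exchange_big /=.
under eq_bigr => w _ do rewrite -mulr_sumr sum_sA net.
by rewrite -mulr_suml sum_sA net.
Qed.

Lemma row_sum_identity :
  r%:Z + a * (pos_deg adj sgn u)%:Z + b * (neg_deg adj sgn u)%:Z + c * #|non_nbrs u|%:Z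
  = rho * rho.
Proof.
have [_ [_ [_ [A2_diag [A2_pos [A2_neg A2_non]]]]]] := srsg.
have sum_const (S : {set V}) k : {in S, forall v, sA2 adj sgn u v = k} ->
    \sum_(v in S) sA2 adj sgn u v = k * #|S|%:Z.
  by move=> S_k; rewrite (eq_bigr (fun=> k)) // sumr_const -mulr_natr natz.
rewrite -sum_square_row -(big_enumeration (star_enum_uniq u) (mem_star_enum u)).
rewrite big_cons !big_cat !big_enum /= A2_diag !addrA.
rewrite (sum_const _ a) => [|v]; last by rewrite inE => /andP[]; apply: A2_pos.
rewrite (sum_const _ b) => [|v]; last by rewrite inE => /andP[]; apply: A2_neg.
rewrite (sum_const _ c) => [//|v].
by rewrite inE => /andP[nuv nadj]; apply: A2_non; rewrite // eq_sym.
Qed.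

End Star.

End AdjacencyRows.

Definition excluded_ab : seq (int * int) :=
  [:: (2, -2); (1, 1); (1, -2); (0, 0); (0, -1); (-1, 0); (-1, -1); (-2, 2)].

Lemma row_sum_bounds (a b c : int) (m : nat) :
  (a, b) \in excluded_ab -> (0 < m)%N ->
  5%:Z + a * 3%:Z + b * 2%:Z + c * m%:Z = 1 * 1 -> (m <= 14)%N /\ -14 <= c <= 14.
Proof.
move=> ab_in m_gt0 row_sum.
have [cm_nz cm_bd] : c * m%:Z != 0 /\ -14 <= c * m%:Z <= 14.
  move: ab_in; rewrite !inE !xpair_eqE.
  by do 7 (case/orP=> [/andP[/eqP ? /eqP ?]|]; first lia); case/andP=> /eqP ? /eqP ?; lia.
have [c_pos|c_neg] : 1 <= c \/ c <= -1 by lia.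
all: nia.
Qed.

Lemma no_srsg_completion :
  all (fun ab => all (fun m => all (fun c =>
      if ~~ odd m && (5%:Z + ab.1 * 3%:Z + ab.2 * 2%:Z + c * m%:Z == 1 * 1)
      then ~~ completable (m + 6) 5 1 ab.1 ab.2 c (m + 6).-1 [:: first_row (m + 6) 3 2]
      else true)
    [seq i%:Z - 14 | i <- iota 0 29]) (iota 1 14)) excluded_ab.
Proof. by vm_compute. Qed.

Theorem mainTheorem13 (V : finType) (adj : rel V) (sgn : V -> V -> bool)
    (n : nat) (a b c : int) :
  simple_graph adj -> sign_sym adj sgn ->
  connected adj -> ~ complete_graph adj ->
  regular adj 5 -> net_regular adj sgn 1 ->
  SRSG adj sgn n 5 a b c ->
  class_C1 adj a b c \/ class_C4 adj a b c \/ class_C5 adj a b c ->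
  (a, b) \in [:: (2, -2); (1, 1); (1, -2); (0, 0); (0, -1); (-1, 0); (-1, -1); (-2, 2)] ->
  False.
Proof.
move=> simple sgn_sym _ not_complete reg net srsg _ ab_in.
have [u [v [neq_uv nadj_uv]]] : exists u v, u != v /\ ~~ adj u v.
  case: (pickP (fun uv : V * V => (uv.1 != uv.2) && ~~ adj uv.1 uv.2)).
    by move=> [u v] /andP[neq_uv nadj_uv]; exists u, v.
  move=> no_pair; case: not_complete => u v neq_uv.
  by have := no_pair (u, v); rewrite /= neq_uv => /negbFE.
have [pos_u neg_u] : pos_deg adj sgn u = 3%N /\ neg_deg adj sgn u = 2%N.
  by have := pos_neg_deg adj sgn u; have := net u; rewrite reg; lia.
set m := #|non_nbrs adj u|.
have m_gt0 : (0 < m)%N by apply/card_gt0P; exists v; rewrite inE eq_sym neq_uv.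
have n_eq : n = (m + 6)%N.
  by have [<- _] := srsg; rewrite (card_star sgn simple u) pos_u neg_u -/m; lia.
have m_even : ~~ odd m.
  have := regular_card_even simple reg; have [-> _] := srsg.
  by rewrite n_eq oddM oddD /= addbF.
have row_sum := row_sum_identity simple u net srsg.
rewrite pos_u neg_u -/m in row_sum.
have [m_le c_bd] := row_sum_bounds ab_in m_gt0 row_sum.
have := completable_first_row simple sgn_sym u reg net srsg.
rewrite pos_u neg_u n_eq; apply/negP.
have m_range : m \in iota 1 14 by rewrite mem_iota; lia.
have c_range : c \in [seq i%:Z - 14 | i <- iota 0 29].
  by apply/mapP; exists (absz (c + 14)); [rewrite mem_iota | ]; lia.
by have := allP (allP (allP no_srsg_completion _ ab_in) _ m_range) _ c_range;
  rewrite /= m_even row_sum eqxx.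
Qed.
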